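(* Let $U$ be the distillation gadget on a complete $B$-ary tree of depth $D$. For every qubit (node) $i$ of the tree, $|\mathrm{supp}(U(Z_i\otimes\mathbb I)U^\dagger)|\le D$; that is, the locality of the parent Hamiltonian of the distillation circuit is at most $D$.
   Context: Layers of the tree are $L_1$ (leaves), $L_2,\dots,L_D$ (root); $N_u$ denotes the children of node $u$; each node is a qubit. The distillation gadget $U$: for $i=2,3,\dots,D$ in this order, for each parent $u\in L_i$ and each child $c\in N_u$, apply $\mathsf{CNOT}$ with control $u$ and target $c$. The parent Hamiltonian of $U$ is $\sum_iUZ_iU^\dagger$. *)

From HB Require Import structures.
From mathcomp Require Import all_boot all_order all_algebra all_field.
Set Implicit Arguments. Unset Strict Implicit. Unset Printing Implicit Defensive.
Import Order.TTheory GRing.Theory Num.Theory.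
Local Open Scope ring_scope.

Section Qubits.
Variable Q : finType.

(* computational basis states: bit assignments to the qubits *)
Definition cbasis := {ffun Q -> bool}.
Definition qdim := #|{: cbasis}|.
Definition qop := 'M[algC]_qdim.

Definition bs (i : 'I_qdim) : cbasis := enum_val (i : 'I_#|{: cbasis}|).

Definition flip (q : Q) (i : 'I_qdim) : 'I_qdim :=
  enum_rank [ffun q' => if q' == q then ~~ bs i q' else bs i q'] : 'I_#|{: cbasis}|.

Definition Zop (q : Q) : qop :=
  \matrix_(i, j) ((i == j)%:R * (-1) ^+ (bs i q)).

Definition cnot_map (c t : Q) (x : cbasis) : cbasis :=
  [ffun q => if q == t then x t (+) x c else x q].
Definition CNOT (c t : Q) : qop :=
  \matrix_(i, j) (bs i == cnot_map c t (bs j))%:R.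

Definition dagger (O : qop) : qop := map_mx Num.conj O^T.

(* O acts as the identity on qubit q, i.e. O = I_q (x) O' : O does not
   change bit q, and its action does not depend on the value of bit q. *)
Definition trivial_on (O : qop) (q : Q) : bool :=
  [forall i, forall j,
     ((bs i q != bs j q) ==> (O i j == 0)) && (O i j == O (flip q i) (flip q j))].

Definition supp (O : qop) : {set Q} := [set q | ~~ trivial_on O q].

(* product of gates applied in order: first gate of the list acts first *)
Definition circuit (gates : seq (Q * Q)) : qop :=
  foldl (fun acc g => CNOT g.1 g.2 *m acc) 1%:M gates.
End Qubits.

(* A node is a word over 'I_B of length k < D (its path from the root).
   The root has k = 0. Layer of a node of length k is D - k, so the
   leaves (k = D-1) form L_1 and the root forms L_D. *)
Definition tnode (B D : nat) := {k : 'I_D & k.-tuple 'I_B}.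

Definition nlen B D (u : tnode B D) : nat := tag u.
Definition nword B D (u : tnode B D) : seq 'I_B := tagged u.

Definition layer_of B D (u : tnode B D) : nat := (D - nlen u)%N.
Definition layer B D (i : nat) : {set tnode B D} := [set u | layer_of u == i].

Definition is_child B D (u c : tnode B D) : bool :=
  (nlen c == (nlen u).+1) && (take (nlen u) (nword c) == nword u).
Definition children B D (u : tnode B D) : {set tnode B D} := [set c | is_child u c].

(* gate list of the distillation gadget: for i = 2,...,D in this order,
   for each parent u in L_i and each child c of u, CNOT(control u, target c).
   (Gates within one layer commute, so the enumeration order inside a layer
   is immaterial.) *)
Definition gadget_gates B D : seq (tnode B D * tnode B D) :=
  flatten [seq flatten [seq [seq (u, c) | c <- enum (children u)]
                         | u <- enum (layer B D i)]
          | i <- iota 2 (D - 1)].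

Definition gadget B D : qop (tnode B D) := circuit (gadget_gates B D).

From HB Require Import structures.
From mathcomp Require Import all_boot all_order all_algebra all_field.
Import Order.TTheory GRing.Theory Num.Theory.
Local Open Scope ring_scope.
Set Implicit Arguments. Unset Strict Implicit. Unset Printing Implicit Defensive.

(* Conjugation by CNOT(c, t)
   sends Z_S to Z_S' where S' = S xor {c} if t \in S and S' = S otherwise
   (Heisenberg picture: Z_t |-> Z_c Z_t). Each gate of the gadget has the
   parent of its target as control, so starting from {i} the Z-string only
   ever gains parents of its members: it stays supported on the ancestors of i
   (i included), of which there is one per depth, hence at most D. *)

Section ZStrings.
Variable Q : finType.
Implicit Types (S A : {set Q}) (x : cbasis Q) (c t : Q) (g : Q * Q).

Definition zsign S x : algC := \prod_(q in S) (-1) ^+ x q.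

Definition Zstring S : qop Q := \matrix_(i, j) ((i == j)%:R * zsign S (bs i)).

Definition zset_cnot g S : {set Q} :=
  if g.2 \in S then (if g.1 \in S then S :\ g.1 else g.1 |: S) else S.

Lemma bs_inj : injective (@bs Q).
Proof. exact: enum_val_inj. Qed.

Lemma bs_enum_rank x : bs (enum_rank x : 'I_(qdim Q)) = x.
Proof. exact: enum_rankK. Qed.

Lemma cnot_mapK c t : c != t -> involutive (cnot_map c t).
Proof.
move=> ct x; apply/ffunP => q; rewrite !ffunE.
case: eqP => [->|] //; rewrite (negbTE ct) eqxx.
by rewrite -addbA addbb addbF.
Qed.

Lemma zsign_cnot_map c t S x : c != t ->
  zsign S (cnot_map c t x) = zsign (zset_cnot (c, t) S) x.
Proof.
move=> ct; rewrite /zset_cnot /=; case: ifP => tS; last first.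
  apply: eq_bigr => q qS; rewrite ffunE; case: eqP => // qt.
  by rewrite qt tS in qS.
rewrite /zsign (bigD1 t) //= ffunE eqxx signr_addb.
have -> : \prod_(q in S | q != t) (-1) ^+ cnot_map c t x q
        = \prod_(q in S | q != t) ((-1) ^+ x q : algC).
  by apply: eq_bigr => q /andP [_ /negbTE qt]; rewrite ffunE qt.
rewrite mulrAC -(bigD1 t (F := fun q => (-1) ^+ x q)) //.
case: ifP => cS; last by rewrite big_setU1 ?cS //= mulrC.
rewrite (bigD1 c) //= mulrC mulrA -mulrA signrMK.
by apply: eq_bigl => q; rewrite !inE andbC.
Qed.

Lemma daggerM (M N : qop Q) : dagger (M *m N) = dagger N *m dagger M.
Proof. by rewrite /dagger trmx_mul map_mxM. Qed.

Lemma dagger1 : dagger (1%:M : qop Q) = 1%:M.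
Proof. by rewrite /dagger trmx1 map_mx1. Qed.

Lemma mulmx_ZstringE (M : qop Q) S i j :
  (M *m Zstring S) i j = M i j * zsign S (bs j).
Proof.
rewrite mxE (bigD1 j) //= big1 ?addr0; first by rewrite mxE eqxx mul1r.
by move=> k /negbTE kj; rewrite mxE kj mul0r mulr0.
Qed.

Lemma conj_CNOT_Zstring c t S : c != t ->
  CNOT c t *m Zstring S *m dagger (CNOT c t) = Zstring (zset_cnot (c, t) S).
Proof.
move=> ct; apply/matrixP => i j; rewrite mxE.
pose k : 'I_(qdim Q) := enum_rank (cnot_map c t (bs i)).
have bs_k : bs k = cnot_map c t (bs i) by rewrite bs_enum_rank.
rewrite (bigD1 k) //= big1 ?addr0; last first.
  move=> l /negbTE lk; rewrite mulmx_ZstringE !mxE.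
  suff -> : (bs i == cnot_map c t (bs l)) = false by rewrite !mul0r.
  apply/negbTE/eqP => il; move: lk.
  by rewrite -(inj_eq bs_inj) bs_k il cnot_mapK // eqxx.
rewrite mulmx_ZstringE !mxE bs_k !cnot_mapK // eqxx mul1r conjC_nat.
by rewrite zsign_cnot_map // (inj_eq bs_inj) eq_sym mulrC.
Qed.

Lemma circuit_cons g gs : circuit (g :: gs) = circuit gs *m CNOT g.1 g.2.
Proof.
rewrite /circuit /= mulmx1; set step := fun _ _ => _.
suff foldlE M : foldl step M gs = foldl step 1%:M gs *m M by rewrite foldlE.
elim: gs M => [|h gs IHgs] M /=; first by rewrite mul1mx.
by rewrite IHgs [in RHS]IHgs /step mulmx1 mulmxA.
Qed.

Lemma conj_circuit_Zstring gs S : all (fun g => g.1 != g.2) gs ->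
  circuit gs *m Zstring S *m dagger (circuit gs)
  = Zstring (foldl (fun S g => zset_cnot g S) S gs).
Proof.
elim: gs S => [|[c t] gs IHgs] S /=; first by rewrite mul1mx dagger1 mulmx1.
case/andP => ct gs_ok; rewrite -IHgs // -conj_CNOT_Zstring //.
by rewrite circuit_cons daggerM !mulmxA.
Qed.

Lemma Zop_Zstring q : Zop q = Zstring [set q].
Proof. by apply/matrixP => i j; rewrite !mxE /zsign big_set1. Qed.

Lemma bs_flip q (i : 'I_(qdim Q)) :
  bs (flip q i) = [ffun q' => if q' == q then ~~ bs i q' else bs i q'].
Proof. exact: bs_enum_rank. Qed.

Lemma flip_inj q : injective (@flip Q q).
Proof.
move=> i j /(congr1 (@bs Q)); rewrite !bs_flip => /ffunP eq_ij.
apply: bs_inj; apply/ffunP => q'.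
by move: (eq_ij q'); rewrite !ffunE; case: eqP => // _ /negb_inj.
Qed.

Lemma supp_Zstring S : supp (Zstring S) \subset S.
Proof.
apply/subsetP => q; rewrite inE; apply: contraNT => qNS.
apply/forallP => i; apply/forallP => j; apply/andP; split.
  apply/implyP; rewrite mxE; case: (i =P j) => [-> | _]; first by rewrite eqxx.
  by rewrite mul0r.
rewrite !mxE (inj_eq (@flip_inj q)); apply/eqP; congr (_ * _).
apply: eq_bigr => q' q'S; rewrite bs_flip ffunE; case: eqP => // q'q.
by rewrite -q'q q'S in qNS.
Qed.

Lemma foldl_zset_cnot_sub A gs S :
  all (fun g => (g.2 \in A) ==> (g.1 \in A)) gs -> S \subset A ->
  foldl (fun S g => zset_cnot g S) S gs \subset A.
Proof.
elim: gs S => [|g gs IHgs] S //= /andP [/implyP gA gsA] SA; apply: IHgs => //.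
rewrite /zset_cnot; case: ifP => // tS; have cA := gA (subsetP SA _ tS).
case: ifP => _; first exact: subset_trans (subD1set _ _) SA.
by rewrite subUset sub1set cA.
Qed.

End ZStrings.

Section Tree.
Variables B D : nat.
Implicit Types i u c : tnode B D.

Definition ancestors i : {set tnode B D} :=
  [set u | (nlen u <= nlen i)%N && (nword u == take (nlen u) (nword i))].

Lemma child_neq u c : is_child u c -> u != c.
Proof.
by case/andP => /eqP lenc _; apply/eqP => uc; move: lenc; rewrite uc; apply: n_Sn.
Qed.

Lemma ancestors_parent i u c :
  is_child u c -> c \in ancestors i -> u \in ancestors i.
Proof.
case/andP => /eqP lenc /eqP wordc; rewrite !inE => /andP [ci /eqP wordci].
have uc : (nlen u <= nlen c)%N by rewrite lenc.
by rewrite (leq_trans uc ci) -wordc wordci take_takel ?eqxx.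
Qed.

Lemma ancestors_self i : i \in ancestors i.
Proof. by rewrite inE leqnn take_oversize ?eqxx // /nword size_tuple. Qed.

Lemma card_ancestors i : (#|ancestors i| <= D)%N.
Proof.
rewrite -(card_in_imset (f := fun u : tnode B D => tag u)).
  by apply: leq_trans (max_card _) _; rewrite card_ord.
move=> [k w] [k' w']; rewrite !inE /nlen /nword /=.
move=> /andP [_ /eqP wi] /andP [_ /eqP w'i] kk'; subst k'.
by congr existT; apply: val_inj; rewrite /= wi w'i.
Qed.

Lemma gadget_gates_child : all (fun g => is_child g.1 g.2) (gadget_gates B D).
Proof.
apply/allP => g /flattenP [_ /mapP [k _ ->]] /flattenP [_ /mapP [u _ ->]].
by case/mapP => c; rewrite mem_enum inE => uc ->.
Qed.

End Tree.

Theorem claim8p4 (B D : nat) (hB : (1 < B)%N) (hD : (0 < D)%N) (i : tnode B D) :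
  (#| supp (gadget B D *m Zop i *m dagger (gadget B D)) | <= D)%N.
Proof.
have gates_child := allP (gadget_gates_child B D).
rewrite /gadget Zop_Zstring conj_circuit_Zstring; last first.
  by apply/allP => g /gates_child /child_neq.
apply: leq_trans (subset_leq_card (supp_Zstring _)) _.
apply: leq_trans (card_ancestors i); apply/subset_leq_card/foldl_zset_cnot_sub.
- by apply/allP => g /gates_child g_child; apply/implyP/ancestors_parent.
- by rewrite sub1set ancestors_self.
Qed.
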